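(* Let $h:(\mathbb{R}^n,0)\to(\mathbb{R}^n,0)$ be a bi-Lipschitz homeomorphism germ, and let $U,V\subset\mathbb{R}^n$ be closed cones with vertex $0$. Suppose that $h(U)$ satisfies condition (SSP). Then $D(h(U\cap V))=D(h(U))\cap D(h(V))$.
   Context: A cone with vertex $0$ is a set $C\subset\mathbb{R}^n$ with $tC\subseteq C$ for all $t\ge0$. For a set-germ $A\subset\mathbb{R}^n$ at $0$, $D(A)=\{a\in S^{n-1}:\exists\, x_i\in A\setminus\{0\},\ x_i\to0,\ x_i/\|x_i\|\to a\}$. For sequences, $\|u_m\|\ll\|v_m\|,\|w_m\|$ means $\|u_m\|/\|v_m\|\to0$ and $\|u_m\|/\|w_m\|\to0$. $A$ satisfies condition (SSP) if for every sequence $a_m\in\mathbb{R}^n$ tending to $0$ with $\lim a_m/\|a_m\|\in D(A)$ there is a sequence $b_m\in A$ with $\|a_m-b_m\|\ll\|a_m\|,\|b_m\|$. A bi-Lipschitz homeomorphism germ is a homeomorphism germ $h$ with $h(0)=0$ and constants $0<K_1\le K_2$ with $K_1\|x-y\|\le\|h(x)-h(y)\|\le K_2\|x-y\|$ near $0$. *)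

From HB Require Import structures.
From mathcomp Require Import all_boot all_order all_algebra.
From mathcomp Require Import all_classical all_reals all_analysis.
Set Implicit Arguments. Unset Strict Implicit. Unset Printing Implicit Defensive.
Import Order.TTheory GRing.Theory Num.Theory.
Import numFieldNormedType.Exports.
Local Open Scope classical_set_scope.
Local Open Scope ring_scope.

Section Defs.
Variables (R : realType) (n : nat).
Notation vec := 'rV[R]_n.

Definition enorm (x : vec) : R := Num.sqrt (\sum_(i < n) (x ord0 i) ^+ 2).

Definition eball0 (r : R) : set vec := [set x | enorm x < r].

Definition is_cone (C : set vec) : Prop :=
  forall t x, 0 <= t -> C x -> C (t *: x).

Definition Dir (A : set vec) : set vec :=
  [set a | enorm a = 1 /\
    exists x : nat -> vec,
      (forall m, A (x m) /\ x m != 0) /\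
      (x @ \oo --> (0 : vec)) /\
      ((fun m => (enorm (x m))^-1 *: x m) @ \oo --> a)].

Definition lsmall (u v : nat -> vec) : Prop :=
  forall e : R, 0 < e -> \forall m \near \oo, enorm (u m) <= e * enorm (v m).

Definition SSP (A : set vec) : Prop :=
  forall a : nat -> vec,
    a @ \oo --> (0 : vec) ->
    (exists2 l, Dir A l & (fun m => (enorm (a m))^-1 *: a m) @ \oo --> l) ->
    exists b : nat -> vec, (forall m, A (b m)) /\
      lsmall (fun m => a m - b m) a /\ lsmall (fun m => a m - b m) b.

(* h is a bi-Lipschitz homeomorphism germ, realized on the Euclidean ball of
   radius r: h 0 = 0, h is (K1,K2)-bi-Lipschitz on that ball, and h maps the
   ball homeomorphically onto an open neighbourhood of 0 (injectivity and
   bicontinuity follow from the bi-Lipschitz inequalities). *)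
Definition biLip_homeo_germ (h : vec -> vec) (r K1 K2 : R) : Prop :=
  0 < r /\ 0 < K1 /\ K1 <= K2 /\ h 0 = 0 /\
      (forall x y, eball0 r x -> eball0 r y ->
         K1 * enorm (x - y) <= enorm (h x - h y) /\
         enorm (h x - h y) <= K2 * enorm (x - y)) /\
      open (h @` eball0 r).

(* the set germ h(A) at 0, represented by h(A ∩ ball) *)
Definition germ_image (h : vec -> vec) (r : R) (A : set vec) : set vec :=
  h @` (A `&` eball0 r).

End Defs.

From HB Require Import structures.
From mathcomp Require Import all_boot all_order all_algebra.
From mathcomp Require Import all_classical all_reals all_analysis.
From mathcomp Require Import ring lra.
Import Order.TTheory GRing.Theory Num.Theory.
Import numFieldNormedType.Exports.
Local Open Scope classical_set_scope.
Local Open Scope ring_scope.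

(* Let a be a limit direction of both h(U) and h(V), realised by y_m in h(V).
   By (SSP) there are b_m in h(U) with |y_m - b_m| << |y_m|; pulling back by
   the bi-Lipschitz h gives v_m in V and u_m in U with |v_m - u_m| << |v_m|.
   For closed cones, compactness of the closed unit ball upgrades this to points
   w_m of U /\ V with |v_m - w_m| << |v_m|, and h(w_m) in h(U /\ V) then has
   limit direction a as well.  The other inclusion is monotonicity of D. *)

Local Notation ndir x := ((enorm x)^-1 *: x).

Section EuclideanNorm.
Context {R : realType} {n : nat}.
Notation vec := 'rV[R]_n.
Implicit Types x y z : vec.

Lemma enorm_ge0 x : 0 <= enorm x.
Proof. exact: sqrtr_ge0. Qed.

Lemma enorm_sqr x : enorm x ^+ 2 = \sum_(i < n) (x ord0 i) ^+ 2.
Proof. by rewrite sqr_sqrtr // sumr_ge0 // => i _; exact: sqr_ge0. Qed.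

Lemma coord_le_enorm x i : `|x ord0 i| <= enorm x.
Proof.
rewrite -ler_sqr ?nnegrE ?enorm_ge0 // real_normK ?num_real // enorm_sqr.
by rewrite (bigD1 i) //= lerDl sumr_ge0 // => j _; exact: sqr_ge0.
Qed.

Lemma enorm0 : enorm (0 : vec) = 0.
Proof. by rewrite /enorm big1 ?sqrtr0 // => i _; rewrite mxE expr0n. Qed.

Lemma enorm_eq0 x : enorm x = 0 -> x = 0.
Proof.
move=> x0; apply/rowP => i; rewrite mxE; apply/normr0_eq0/eqP.
by rewrite eq_le normr_ge0 andbT -x0 coord_le_enorm.
Qed.

Lemma enorm_gt0 {x} : x != 0 -> 0 < enorm x.
Proof.
move=> x0; rewrite lt0r enorm_ge0 andbT; apply/eqP => /enorm_eq0 x0E.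
by rewrite x0E eqxx in x0.
Qed.

Lemma enormZ t x : enorm (t *: x) = `|t| * enorm x.
Proof.
rewrite /enorm (eq_bigr (fun i => t ^+ 2 * (x ord0 i) ^+ 2)); last first.
  by move=> i _; rewrite mxE exprMn.
by rewrite -mulr_sumr sqrtrM ?sqr_ge0 // sqrtr_sqr.
Qed.

Lemma enorm_distC x y : enorm (x - y) = enorm (y - x).
Proof. by rewrite -opprB -scaleN1r enormZ normrN1 mul1r. Qed.

Lemma cauchy_schwarz x y :
  \sum_(i < n) x ord0 i * y ord0 i <= enorm x * enorm y.
Proof.
have [->|x0] := eqVneq x 0.
  by rewrite enorm0 mul0r big1 // => i _; rewrite mxE mul0r.
have [->|y0] := eqVneq y 0.
  by rewrite enorm0 mulr0 big1 // => i _; rewrite mxE mulr0.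
set s := \sum_(i < n) _.
set a := enorm y; set b := enorm x.
have ab0 : 0 < 2 * a * b by rewrite !mulr_gt0 ?enorm_gt0.
have sq_ge0 : 0 <= \sum_(i < n) (a * x ord0 i - b * y ord0 i) ^+ 2.
  by apply: sumr_ge0 => i _; exact: sqr_ge0.
have sumE : \sum_(i < n) (a * x ord0 i - b * y ord0 i) ^+ 2 =
    a ^+ 2 * b ^+ 2 * 2 - 2 * a * b * s.
  rewrite (eq_bigr (fun i => a ^+ 2 * x ord0 i ^+ 2 + b ^+ 2 * y ord0 i ^+ 2
       - 2 * a * b * (x ord0 i * y ord0 i))); last by move=> i _; ring.
  rewrite sumrB big_split /= -!mulr_sumr /s -!enorm_sqr -/a -/b; ring.
rewrite sumE subr_ge0 in sq_ge0; rewrite -(ler_pM2l ab0).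
by apply: le_trans sq_ge0 _; rewrite le_eqVlt; apply/orP; left; apply/eqP; ring.
Qed.

Lemma ler_enormD x y : enorm (x + y) <= enorm x + enorm y.
Proof.
rewrite -ler_sqr ?nnegrE ?addr_ge0 ?enorm_ge0 // enorm_sqr.
rewrite (eq_bigr (fun i => x ord0 i ^+ 2 + y ord0 i ^+ 2 + 2 * (x ord0 i * y ord0 i))); last first.
  by move=> i _; rewrite mxE; ring.
rewrite !big_split /= -mulr_sumr -!enorm_sqr.
have := cauchy_schwarz x y; lra.
Qed.

Lemma ler_enorm_distD x y z : enorm (x - z) <= enorm (x - y) + enorm (y - z).
Proof. by apply: le_trans (ler_enormD _ _); rewrite addrA subrK. Qed.

Lemma ler_enorm_dist x y : `|enorm x - enorm y| <= enorm (x - y).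
Proof.
have le_dist (u v : vec) : enorm u - enorm v <= enorm (u - v).
  by rewrite lerBlDr; have := ler_enormD (u - v) v; rewrite subrK.
by rewrite ler_norml le_dist andbT lerNl opprB enorm_distC le_dist.
Qed.

Lemma norm_le_enorm x : `|x| <= enorm x.
Proof.
rewrite [leLHS]/Num.Def.normr /= mx_normrE; apply/bigmax_leP; split; first exact: enorm_ge0.
by move=> [i j] _ /=; rewrite (ord1 i); exact: coord_le_enorm.
Qed.

Lemma enorm_le_norm x : enorm x <= n%:R * `|x|.
Proof.
have coord_le_norm i : `|x ord0 i| <= `|x|.
  by rewrite [leRHS]/Num.Def.normr /= mx_normrE; apply/bigmax_geP; right; exists (ord0, i).
rewrite -ler_sqr ?nnegrE ?mulr_ge0 ?enorm_ge0 // enorm_sqr.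
apply: (@le_trans _ _ (\sum_(i < n) `|x| ^+ 2)).
  apply: ler_sum => i _; rewrite -real_normK ?num_real //.
  by rewrite lerXn2r ?nnegrE ?normr_ge0 // coord_le_norm.
rewrite sumr_const card_ord -mulr_natl exprMn.
have : (n%:R : R) <= n%:R ^+ 2.
  by rewrite -natrX ler_nat; case: (n) => // k; rewrite expnS leq_pmulr.
by have := sqr_ge0 `|x|; nra.
Qed.

Lemma enorm_ndirB {x y} : x != 0 -> y != 0 ->
  enorm (ndir y - ndir x) <= 2 * (enorm (y - x) / enorm x).
Proof.
move=> x0 y0; have a0 := enorm_gt0 x0; have b0 := enorm_gt0 y0.
set a := enorm x in a0 *; set b := enorm y in b0 *.
have -> : b^-1 *: y - a^-1 *: x = a^-1 *: (y - x) + (b^-1 - a^-1) *: y.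
  by apply/rowP => i; rewrite !mxE; ring.
apply: le_trans (ler_enormD _ _) _; rewrite !enormZ -/b.
have -> : `|b^-1 - a^-1| * b = `|a - b| / a.
  have -> : b^-1 - a^-1 = (a - b) / (a * b) by field; rewrite ?gt_eqF.
  rewrite normrM normfV normrM (gtr0_norm a0) (gtr0_norm b0).
  by field; rewrite ?gt_eqF.
have ab : `|a - b| <= enorm (y - x) by rewrite distrC ler_enorm_dist.
rewrite gtr0_norm ?invr_gt0 // mulrC [_ / a]mulrC mulr_natl mulr2n lerD2l.
by rewrite mulrC ler_pM2r ?invr_gt0.
Qed.

Lemma ndir_near {x y : vec} {rho : R} : x != 0 -> rho < 1 ->
  enorm (x - y) <= rho * enorm x ->
  [/\ y != 0, enorm y <= (1 + rho) * enorm x & enorm (ndir y - ndir x) <= 2 * rho].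
Proof.
move=> x0 rho1 xy; have t0 := enorm_gt0 x0.
have := ler_enorm_dist x y; rewrite ler_norml => /andP[ylo _].
have y0 : y != 0 by apply: contraTneq xy => ->; rewrite subr0 -ltNge; nra.
split => //; first lra.
apply: le_trans (enorm_ndirB x0 y0) _; rewrite enorm_distC ler_pM2l //.
by rewrite ler_pdivrMr.
Qed.

End EuclideanNorm.

Section EuclideanTopology.
Context {R : realType} {n : nat}.
Notation vec := 'rV[R]_n.
Implicit Types (x y p : vec) (A : set vec).

Lemma enorm_le_of_norm (e : R) x : 0 < e -> `|x| < e / (n%:R + 1) -> enorm x <= e.
Proof.
move=> e0 /ltW xe; have n1 : 0 < (n%:R : R) + 1 by rewrite ltr_wpDl.
apply: le_trans (enorm_le_norm _) _; apply: le_trans (ler_wpM2l (ler0n _ n) xe) _.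
by rewrite mulrA ler_pdivrMr //; nra.
Qed.

Lemma ball_enorm_le {e : R} {x y : vec} : 0 < e -> ball x (e / (n%:R + 1)) y -> enorm (y - x) <= e.
Proof. by move=> e0; rewrite -ball_normE /ball_ /= distrC; exact: enorm_le_of_norm. Qed.

Lemma enorm_lt_ball (e : R) x y : enorm (y - x) < e -> ball x e y.
Proof.
by rewrite -ball_normE /ball_ /= distrC; apply: le_lt_trans (norm_le_enorm _).
Qed.

Lemma cvg_enormP {T} {F : set_system T} {FF : Filter F} (f : T -> vec) (a : vec) :
  f @ F --> a <-> forall e : R, 0 < e -> \forall t \near F, enorm (f t - a) <= e.
Proof.
split=> [/cvgrPdist_lt fa e e0 | fa].
  have e' : 0 < e / (n%:R + 1) by rewrite divr_gt0 // ltr_wpDl.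
  by apply: filterS (fa _ e') => t; rewrite distrC; exact: enorm_le_of_norm.
apply/cvgrPdist_lt => e e0; have e2 : 0 < e / 2 by rewrite divr_gt0.
near=> t; rewrite distrC; apply: le_lt_trans (norm_le_enorm _) _.
have : enorm (f t - a) <= e / 2 by near: t; exact: fa.
lra.
Unshelve. all: by end_near.
Qed.

Lemma closed_enormP A :
  closed A <-> forall p, (forall e : R, 0 < e -> exists2 u, A u & enorm (u - p) <= e) -> A p.
Proof.
split=> [cA p Ap | Aapprox p clAp]; last first.
  apply: Aapprox => e e0.
  have e' : 0 < e / (n%:R + 1) by rewrite divr_gt0 // ltr_wpDl.
  by have [u [Au /(ball_enorm_le e0)]] := clAp _ (nbhsx_ballx _ _ e'); exists u.
apply: cA => B /nbhs_ballP[e /= e0 eB].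
have [u Au up] : exists2 u, A u & enorm (u - p) <= e / 2 by apply: Ap; rewrite divr_gt0.
by exists u; split => //; apply/eB/enorm_lt_ball; lra.
Qed.

Lemma cluster_enorm {x : nat -> vec} {p} {P : set nat} {e : R} :
  cluster (x @ \oo) p -> (\forall k \near \oo, P k) -> 0 < e ->
  exists2 k, P k & enorm (x k - p) <= e.
Proof.
move=> clp FP e0; have e' : 0 < e / (n%:R + 1) by rewrite divr_gt0 // ltr_wpDl.
have [_ [[k Pk <-] /(ball_enorm_le e0) xkp]] :=
  clp (x @` P) _ (filterS (fun k Pk => ex_intro2 _ _ k Pk erefl) FP)
      (nbhsx_ballx _ _ e').
by exists k.
Qed.

Lemma compact_enorm_le1 {A} : closed A -> compact (A `&` [set x | enorm x <= 1]).
Proof.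
move=> cA; apply: bounded_closed_compact.
  suff : [bounded y | y in A `&` [set x | enorm x <= 1]] by [].
  rewrite /bounded_near; near=> M => y [_ y1] /=.
  apply: le_trans (norm_le_enorm _) _; apply: le_trans y1 _.
  by near: M; apply: nbhs_pinfty_ge; exact: num_real.
apply: closedI => //; apply/closed_enormP => p pP; rewrite /= leNgt; apply/negP => p1.
have [u /= u1 up] : exists2 u : vec, enorm u <= 1 & enorm (u - p) <= (enorm p - 1) / 2.
  by apply: pP; rewrite divr_gt0 // subr_gt0.
have := ler_enorm_dist p u; rewrite enorm_distC ler_norml; lra.
Unshelve. all: by end_near.
Qed.

End EuclideanTopology.

Section Directions.
Context {R : realType} {n : nat}.
Notation vec := 'rV[R]_n.
Implicit Types (A B U V : set vec) (a : vec).

Lemma DirS A B : A `<=` B -> Dir A `<=` Dir B.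
Proof.
move=> AB a [a1 [x [Ax x0]]]; split => //; exists x; split => // m.
by have [? ?] := Ax m; split => //; exact: AB.
Qed.

Lemma Dir_approx A a : enorm a = 1 ->
  (forall e : R, 0 < e -> exists z, [/\ A z, z != 0, enorm z <= e & enorm (ndir z - a) <= e]) ->
  Dir A a.
Proof.
move=> a1 Aa; split => //.
have /choice[z zP] : forall k : nat, exists z,
    [/\ A z, z != 0, enorm z <= k.+1%:R^-1 & enorm (ndir z - a) <= k.+1%:R^-1].
  by move=> k; apply: Aa; rewrite invr_gt0.
have small_inv (e : R) : 0 < e -> \forall k \near \oo, k.+1%:R^-1 <= e.
  move=> e0; near=> k; apply/ltW; near: k; exact: near_infty_natSinv_lt (PosNum e0).
exists z; split; first by move=> m; have [] := zP m.
split; apply/cvg_enormP => e /small_inv; apply: filterS => k ke.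
  by rewrite subr0; have [_ _ zk _] := zP k; exact: le_trans ke.
by have [_ _ _ zk] := zP k; exact: le_trans ke.
Unshelve. all: by end_near.
Qed.

(* Otherwise the bad points x_k of V would cluster at some p of the compact
   V /\ {enorm <= 1}; p is also a limit of the u_k, so p is in U /\ V and
   some x_k is within e of it. *)
Lemma closed_cap_approx {U V} {e : R} : closed U -> closed V -> 0 < e ->
  exists2 d : R, 0 < d & forall x u, V x -> enorm x <= 1 -> U u ->
    enorm (x - u) <= d -> exists2 w, (U `&` V) w & enorm (x - w) <= e.
Proof.
move=> cU cV e0; apply: contrapT => noD.
have /choice[xu xuP] : forall k : nat, exists p : vec * vec,
    [/\ (V `&` [set x | enorm x <= 1]) p.1, U p.2, enorm (p.1 - p.2) <= k.+1%:R^-1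
      & forall w, (U `&` V) w -> e < enorm (p.1 - w)].
  move=> k; apply: contrapT => nok; apply: noD; exists k.+1%:R^-1 => // x u Vx x1 Uu xu.
  apply: contrapT => /forall2NP far; apply: nok; exists (x, u); split => // w UVw.
  by rewrite ltNge; apply/negP; have [] := far w.
pose x k := (xu k).1.
have xK : \forall k \near \oo, (V `&` [set x | enorm x <= 1]) (x k).
  by apply: filterE => k; have [] := xuP k.
have [p [Kp clp]] := compact_enorm_le1 cV (x @ \oo) _ xK.
have Up : U p.
  have := (closed_enormP U).1 cU p; apply=> d d0.
  have d2 : 0 < d / 2 by rewrite divr_gt0.
  have [k /= kd xkp] := cluster_enorm clp (near_infty_natSinv_lt (PosNum d2)) d2.
  have [_ Uk xuk _] := xuP k; exists (xu k).2 => //.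
  have := ler_enorm_distD (xu k).2 (x k) p; rewrite enorm_distC in xuk.
  rewrite /x in xkp *; move/le_trans; apply; rewrite [leRHS]splitr.
  by apply: lerD xkp; exact: le_trans xuk (ltW kd).
have [k _ xkp] := cluster_enorm clp (@filterT _ _ _) e0.
have [_ _ _ far] := xuP k; have := far p (conj Up Kp.1).
by rewrite /x in xkp; rewrite ltNge xkp.
Qed.

Lemma cone_cap_approx {U V} {e : R} : closed U -> closed V -> is_cone U -> is_cone V ->
  0 < e -> exists2 d : R, 0 < d & forall v u, V v -> U u ->
    enorm (v - u) <= d * enorm v -> exists2 w, (U `&` V) w & enorm (v - w) <= e * enorm v.
Proof.
move=> cU cV coU coV e0; have [d d0 capd] := closed_cap_approx cU cV e0.
exists d => // v u Vv Uu vu; have [v0|/enorm_gt0 t0] := eqVneq v 0.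
  rewrite v0 enorm0 mulr0 sub0r -scaleN1r enormZ normrN1 mul1r in vu.
  have u0 : u = 0 by apply: enorm_eq0; apply/eqP; rewrite eq_le vu enorm_ge0.
  exists v; first by split => //; rewrite v0 -u0.
  by rewrite subrr enorm0 mulr_ge0 ?enorm_ge0 ?ltW.
set t := enorm v in vu t0 *; have it0 : 0 <= t^-1 by rewrite invr_ge0 ltW.
have [w' [Uw' Vw'] vw'] : exists2 w', (U `&` V) w' & enorm (t^-1 *: v - w') <= e.
  apply: (capd _ (t^-1 *: u)); rewrite ?enormZ ?ger0_norm ?mulVf ?gt_eqF //.
  - exact: coV.
  - exact: coU.
  by rewrite -scalerBr enormZ ger0_norm // ler_pdivrMl // mulrC.
exists (t *: w'); first by split; [apply: coU | apply: coV]; rewrite ?ltW.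
have tn0 : t != 0 by rewrite gt_eqF.
rewrite -[v in v - _](scalerKV tn0) -scalerBr enormZ gtr0_norm //.
by rewrite mulrC ler_pM2r.
Qed.

End Directions.

Section BiLipschitzGerm.
Context {R : realType} {n : nat}.
Notation vec := 'rV[R]_n.
Context {h : vec -> vec} {r K1 K2 : R}.
Hypothesis hh : biLip_homeo_germ h r K1 K2.

Let K1_gt0 : 0 < K1. Proof. by case: hh => _ []. Qed.
Let K2_gt0 : 0 < K2. Proof. by case: hh => _ [K10 [K12 _]]; exact: lt_le_trans K12. Qed.

Lemma germ_biLip {v w : vec} : eball0 r v -> eball0 r w ->
  K1 * enorm (v - w) <= enorm (h v - h w) /\ enorm (h v - h w) <= K2 * enorm (v - w).
Proof. by case: hh => _ [_ [_ [_ [biLip _]]]]; exact: biLip. Qed.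

Lemma germ_enorm {v : vec} : eball0 r v -> K1 * enorm v <= enorm (h v) /\ enorm (h v) <= K2 * enorm v.
Proof.
move=> rv; have r0 : eball0 r (0 : vec) by rewrite /eball0 /= enorm0; case: hh.
have h0 : h 0 = 0 by case: hh => _ [_ [_ []]].
by have := germ_biLip rv r0; rewrite h0 !subr0.
Qed.

Lemma germ_pullback_near {v u : vec} {eta : R} : eball0 r v -> eball0 r u -> 0 <= eta ->
  enorm (h v - h u) <= eta * enorm (h v) -> enorm (v - u) <= K2 / K1 * eta * enorm v.
Proof.
move=> rv ru eta0 huv; have [lo _] := germ_biLip rv ru; have [_ hi] := germ_enorm rv.
rewrite -(ler_pM2l K1_gt0).
have -> : K1 * (K2 / K1 * eta * enorm v) = eta * (K2 * enorm v) by field; rewrite gt_eqF.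
by apply: le_trans lo (le_trans huv _); exact: ler_wpM2l.
Qed.

Lemma germ_pushforward_near {v w : vec} {theta : R} : eball0 r v -> eball0 r w -> 0 <= theta ->
  enorm (v - w) <= theta * enorm v -> enorm (h v - h w) <= K2 / K1 * theta * enorm (h v).
Proof.
move=> rv rw theta0 vw; have [_ hi] := germ_biLip rv rw; have [lo _] := germ_enorm rv.
apply: le_trans hi _; apply: le_trans (ler_wpM2l (ltW K2_gt0) vw) _.
have -> : K2 * (theta * enorm v) = K2 / K1 * theta * (K1 * enorm v) by field; rewrite gt_eqF.
by rewrite ler_wpM2l // mulr_ge0 // divr_ge0 // ltW.
Qed.

Lemma germ_cap_approx {U V} {rho : R} : closed U -> closed V -> is_cone U -> is_cone V ->
  0 < rho -> rho <= 1 -> exists2 eta : R, 0 < eta & forall v u,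
    (V `&` eball0 r) v -> (U `&` eball0 r) u -> 2 * enorm (h v) < r * K1 ->
    enorm (h v - h u) <= eta * enorm (h v) ->
    exists2 z, germ_image h r (U `&` V) z & enorm (h v - z) <= rho * enorm (h v).
Proof.
move=> cU cV coU coV rho0 rho1.
have K12 : K1 <= K2 by case: hh => _ [_ []].
pose theta := K1 / K2 * rho.
have theta0 : 0 < theta by rewrite mulr_gt0 ?divr_gt0.
have theta1 : theta <= 1.
  have K21 : K1 / K2 <= 1 by rewrite ler_pdivrMr // mul1r.
  by apply: le_trans K21; rewrite /theta ler_piMr // divr_ge0 // ltW.
have [d d0 capd] := cone_cap_approx cU cV coU coV theta0.
exists (K1 / K2 * d); first by rewrite mulr_gt0 ?divr_gt0.
move=> v u [Vv rv] [Uu ru] hvr huv.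
have vu : enorm (v - u) <= d * enorm v.
  have eta0 : 0 <= K1 / K2 * d by rewrite !mulr_ge0 ?invr_ge0 // ltW.
  have := germ_pullback_near rv ru eta0 huv.
  by have -> : K2 / K1 * (K1 / K2 * d) = d by field; rewrite ?gt_eqF.
have [w [Uw Vw] vw] := capd v u Vv Uu vu.
have rw : eball0 r w.
  have [lo _] := germ_enorm rv.
  have v2 : 2 * enorm v < r.
    by rewrite -(ltr_pM2l K1_gt0) mulrCA [K1 * r]mulrC; lra.
  have : theta * enorm v <= enorm v by rewrite ler_piMl ?enorm_ge0.
  have := ler_enorm_distD w v 0; rewrite !subr0 enorm_distC /eball0 /=; lra.
exists (h w); first by exists w.
have := germ_pushforward_near rv rw (ltW theta0) vw.
by have -> : K2 / K1 * theta = rho by rewrite /theta; field; rewrite ?gt_eqF.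
Qed.

Lemma germ_imageS (A B : set vec) : A `<=` B -> germ_image h r A `<=` germ_image h r B.
Proof. by move=> AB _ [x [Ax rx] <-]; exists x => //; split => //; exact: AB. Qed.

Lemma Dir_germ_imageI {U V} : closed U -> closed V -> is_cone U -> is_cone V ->
  SSP (germ_image h r U) ->
  Dir (germ_image h r U) `&` Dir (germ_image h r V) `<=` Dir (germ_image h r (U `&` V)).
Proof.
move=> cU cV coU coV ssp a [aU [a1 [y [yV [y0 ya]]]]].
have [b [bU [yb _]]] := ssp y y0 (ex_intro2 _ _ a aU ya).
apply: Dir_approx => // e e0.
pose rho := Num.min (1 / 2) (e / 4).
have rho0 : 0 < rho by rewrite lt_min !divr_gt0.
have rho_half : rho <= 1 / 2 by rewrite ge_min lexx.
have rho_e : rho <= e / 4 by rewrite ge_min lexx orbT.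
have rho1 : rho <= 1 by lra.
have [eta eta0 capeta] := germ_cap_approx cU cV coU coV rho0 rho1.
have rK0 : 0 < r * K1 / 4 by case: hh => r0 [K10 _]; rewrite !divr_gt0 ?mulr_gt0.
have e2 : 0 < e / 2 by rewrite divr_gt0.
have : \forall m \near \oo, [/\ enorm (y m) <= e / 2, enorm (y m) <= r * K1 / 4,
    enorm (ndir (y m) - a) <= e / 2 & enorm (y m - b m) <= eta * enorm (y m)].
  have /cvg_enormP y0e := y0; have /cvg_enormP yae := ya.
  near=> m; split.
  - by rewrite -[y m]subr0; near: m; exact: y0e _ e2.
  - by rewrite -[y m]subr0; near: m; exact: y0e _ rK0.
  - by near: m; exact: yae _ e2.
  - by near: m; exact: yb _ eta0.
case/filter_ex => m [ye yr yae yb_m].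
have [[v [Vv rv] hv] ym0] := yV m; have [u [Uu ru] hu] := bU m.
have [z zUV yz] : exists2 z, germ_image h r (U `&` V) z & enorm (y m - z) <= rho * enorm (y m).
  by rewrite -hv; apply: (capeta v u); rewrite ?hv ?hu //; lra.
have rho_lt1 : rho < 1 by lra.
have [z0 zy dirz] := ndir_near ym0 rho_lt1 yz.
exists z; split => //.
  by have := enorm_ge0 (y m); nra.
have := ler_enorm_distD (ndir z) (ndir (y m)) a; lra.
Unshelve. all: by end_near.
Qed.

End BiLipschitzGerm.

Theorem proposition2p29 (R : realType) (n : nat) (h : 'rV[R]_n -> 'rV[R]_n)
  (r K1 K2 : R) (U V : set 'rV[R]_n) :
  biLip_homeo_germ h r K1 K2 ->
  closed U -> is_cone U -> closed V -> is_cone V ->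
  SSP (germ_image h r U) ->
  Dir (germ_image h r (U `&` V)) =
    Dir (germ_image h r U) `&` Dir (germ_image h r V).
Proof.
move=> hh cU coU cV coV ssp; apply/seteqP; split.
  by move=> a UVa; split; apply: DirS UVa; apply: germ_imageS => x [].
have := Dir_germ_imageI hh cU cV coU coV ssp; apply.
Qed.
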